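(* Let $N=\{1,\dots,n\}$, let $U$ be a finite set, $S_1,\dots,S_n\subseteq U$, $w:U\to\mathbb{R}$, $c\in\mathbb{R}$, and let $s:2^N\to\mathbb{R}$ be defined by $s_A=c+\mathbf{w}(\bigcup_{i\in A}S_i)$, where $\mathbf{w}(S)=\sum_{u\in S}w(u)$. Define the type-4 discrete set Fourier transform of $s$ by $\widehat{s}^{(4)}_B=\sum_{A\subseteq N,\,A\cup B=N}(-1)^{|A\cap B|}s_A$ for $B\subseteq N$. Then $$\widehat{s}^{(4)}_B=\begin{cases}-\mathbf{w}\Big(\bigcap_{i\in B}S_i\setminus\bigcup_{i\notin B}S_i\Big), & B\neq\emptyset,\\ s_N, & B=\emptyset.\end{cases}$$ *)

From mathcomp Require Import all_boot all_order all_algebra.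
Set Implicit Arguments. Unset Strict Implicit. Unset Printing Implicit Defensive.
Import Order.TTheory GRing.Theory Num.Theory.
Local Open Scope ring_scope.

Definition wsum (R : numDomainType) (U : finType) (w : U -> R) (S : {set U}) : R :=
  \sum_(u in S) w u.

Definition sfun (R : numDomainType) (U : finType) (n : nat)
  (S : 'I_n -> {set U}) (w : U -> R) (c : R) (A : {set 'I_n}) : R :=
  c + wsum w (\bigcup_(i in A) S i).

Definition fourier4 (R : numDomainType) (n : nat) (s : {set 'I_n} -> R)
  (B : {set 'I_n}) : R :=
  \sum_(A : {set 'I_n} | A :|: B == [set: 'I_n]) (-1) ^+ #|A :&: B| * s A.

From mathcomp Require Import all_boot all_order all_algebra.
Import Order.TTheory GRing.Theory Num.Theory.
Set Implicit Arguments. Unset Strict Implicit. Unset Printing Implicit Defensive.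
Local Open Scope ring_scope.

(* The transform is linear in s. If x is in B, toggling x in A preserves A :|: B
   and flips the sign (-1)^|A :&: B|, so the transform of any s invariant under
   this toggle vanishes.  This gives 0 for constants, and [I == B] for the
   indicator of A :&: I = set0.
   Writing s A = c + \sum_u w u * [A meets I_u], with I_u = {i | u \in S i},
   the transform at B <> set0 is -\sum_u w u [I_u == B], and I_u = B says exactly
   that u lies in the S_i for i in B and in no other S_i.  At B = set0 only the
   term A = N survives. *)

Lemma setU_eqT (T : finType) (A B : {set T}) :
  (A :|: B == [set: T]) = (~: B \subset A).
Proof.
by rewrite -subTset -setCS setCU setCT subset0 setIC setI_eq0 disjoints_subset setCK.
Qed.

Section Toggle.

Variables (T : finType) (x : T).

Definition toggle (A : {set T}) : {set T} := if x \in A then A :\ x else x |: A.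

Lemma in_toggle (A : {set T}) (i : T) : (i \in toggle A) = (i == x) (+) (i \in A).
Proof. by rewrite /toggle; case: ifP => xA; rewrite !inE; case: eqP => [->|]; rewrite ?xA. Qed.

Lemma toggleK : involutive toggle.
Proof. by move=> A; apply/setP => i; rewrite !in_toggle addbA addbb. Qed.

Lemma toggleU (A B : {set T}) : x \in B -> toggle A :|: B = A :|: B.
Proof.
by move=> xB; apply/setP => i; rewrite !inE in_toggle; case: eqP => // ->; rewrite xB !orbT.
Qed.

Lemma toggleI (A B : {set T}) : x \in B -> toggle A :&: B = toggle (A :&: B).
Proof.
move=> xB; apply/setP => i; rewrite !(inE, in_toggle).
by case: eqP => // ->; rewrite xB !andbT.
Qed.

Lemma sign_toggle (R : pzRingType) (A : {set T}) :
  (-1) ^+ #|toggle A| = - (-1) ^+ #|A| :> R.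
Proof.
rewrite /toggle; case: ifP => xA.
  by rewrite [in RHS](cardsD1 x) xA exprS mulN1r opprK.
by rewrite cardsU1 xA exprS mulN1r.
Qed.

End Toggle.

Section Fourier4.

Variables (R : numDomainType) (n : nat).
Implicit Types (f g : {set 'I_n} -> R) (A B I : {set 'I_n}).

Lemma eq_fourier4 f g B : f =1 g -> fourier4 f B = fourier4 g B.
Proof. by move=> fg; apply: eq_bigr => A _; rewrite fg. Qed.

Lemma fourier4D f g B :
  fourier4 (fun A => f A + g A) B = fourier4 f B + fourier4 g B.
Proof. by rewrite -big_split; apply: eq_bigr => A _; rewrite mulrDr. Qed.

Lemma fourier4B f g B :
  fourier4 (fun A => f A - g A) B = fourier4 f B - fourier4 g B.
Proof. by rewrite -sumrB; apply: eq_bigr => A _; rewrite mulrBr. Qed.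

Lemma fourier4Z (a : R) f B : fourier4 (fun A => a * f A) B = a * fourier4 f B.
Proof. by rewrite big_distrr; apply: eq_bigr => A _; rewrite mulrCA. Qed.

Lemma fourier4_sum (J : Type) (r : seq J) (P : pred J) (F : J -> {set 'I_n} -> R) B :
  fourier4 (fun A => \sum_(j <- r | P j) F j A) B = \sum_(j <- r | P j) fourier4 (F j) B.
Proof.
by rewrite exchange_big; apply: eq_bigr => A _; rewrite big_distrr.
Qed.

Lemma fourier4_set0 f : fourier4 f set0 = f [set: 'I_n].
Proof.
rewrite /fourier4 (big_pred1 [set: 'I_n]) => [|A]; last by rewrite /= setU0.
by rewrite setI0 cards0 expr0 mul1r.
Qed.

Lemma fourier4_toggle_eq0 f x B :
  x \in B -> (forall A, f (toggle x A) = f A) -> fourier4 f B = 0.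
Proof.
move=> xB fE; have fourierN : - fourier4 f B = fourier4 f B.
  rewrite {2}/fourier4 (reindex_inj (can_inj (toggleK x))) /= -sumrN.
  apply: eq_big => [A | A _]; first by rewrite toggleU.
  by rewrite fE toggleI // sign_toggle mulNr.
by apply/eqP; rewrite -eqNr fourierN.
Qed.

Lemma fourier4_cst (a : R) B : B != set0 -> fourier4 (fun => a) B = 0.
Proof. by case/set0Pn=> x xB; apply: fourier4_toggle_eq0 xB _. Qed.

Lemma fourier4_disjoint I B :
  fourier4 (fun A => (A :&: I == set0)%:R) B = (I == B)%:R :> R.
Proof.
have [BsubI | /subsetPn[x xB xNI]] := boolP (B \subset I); last first.
  rewrite (fourier4_toggle_eq0 xB) => [|A].
    by case: eqP xNI => // ->; rewrite xB.
  suff -> : toggle x A :&: I = A :&: I by [].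
  apply/setP => i; rewrite !(inE, in_toggle).
  by case: eqP => // ->; rewrite (negbTE xNI) !andbF.
have supportE A : (A :|: B == [set: 'I_n]) && (A :&: I == set0) = (A == ~: B) && (I == B).
  rewrite setU_eqT setI_eq0 disjoints_subset.
  apply/andP/andP => [[CBsubA AsubCI] | [/eqP -> /eqP ->]]; last by rewrite !subxx.
  have CIsubCB : ~: I \subset ~: B by rewrite setCS.
  have CBsubCI := subset_trans CBsubA AsubCI.
  by rewrite !eqEsubset CBsubA BsubI (subset_trans AsubCI CIsubCB) -setCS CBsubCI.
rewrite /fourier4 (eq_bigr (fun A => if A :&: I == set0 then (-1) ^+ #|A :&: B| else 0))
  => [|A _]; last by case: eqP; rewrite ?mulr1 ?mulr0.
rewrite -big_mkcondr (eq_bigl _ _ supportE); case: eqP => _ /=.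
  by rewrite (big_pred1 (~: B)) => [|A]; rewrite ?andbT // setIC setICr cards0 expr0.
by apply: big_pred0 => A; rewrite andbF.
Qed.

Lemma fourier4_meet I B : B != set0 ->
  fourier4 (fun A => (A :&: I != set0)%:R) B = - (I == B)%:R :> R.
Proof.
move=> B0; rewrite (@eq_fourier4 _ (fun A => 1 - (A :&: I == set0)%:R)) => [|A].
  by rewrite fourier4B fourier4_cst // fourier4_disjoint sub0r.
by case: eqP; rewrite ?subr0 ?subrr.
Qed.

End Fourier4.

Section Coverage.

Variables (U : finType) (n : nat) (S : 'I_n -> {set U}).
Implicit Types (A B : {set 'I_n}) (u : U).

Definition covering_indices (u : U) : {set 'I_n} := [set i | u \in S i].

Lemma in_bigcup_covering A u :
  (u \in \bigcup_(i in A) S i) = (A :&: covering_indices u != set0).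
Proof.
apply/bigcupP/set0Pn => [[i iA uSi] | [i]]; first by exists i; rewrite !inE iA.
by rewrite !inE => /andP[iA uSi]; exists i.
Qed.

Lemma covering_indicesE B u :
  (covering_indices u == B) = (u \in (\bigcap_(i in B) S i) :\: \bigcup_(i in ~: B) S i).
Proof.
rewrite inE in_bigcup_covering negbK setI_eq0 disjoints_subset setCS eqEsubset.
congr (_ && _); apply/subsetP/bigcapP => sub i /sub; by rewrite inE.
Qed.

Lemma wsum_bigcup (R : numDomainType) (w : U -> R) A :
  wsum w (\bigcup_(i in A) S i) = \sum_u w u * (A :&: covering_indices u != set0)%:R.
Proof.
by rewrite /wsum big_mkcond; apply: eq_bigr => u _; rewrite in_bigcup_covering; case: ifP;
  rewrite ?mulr1 ?mulr0.
Qed.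

End Coverage.

Theorem theorem3 (R : realFieldType) (U : finType) (n : nat)
  (S : 'I_n -> {set U}) (w : U -> R) (c : R) (B : {set 'I_n}) :
  fourier4 (sfun S w c) B =
    (if B != set0 then
       - wsum w ((\bigcap_(i in B) S i) :\: (\bigcup_(i in ~: B) S i))
     else sfun S w c [set: 'I_n]).
Proof.
have [B0 | /negPn/eqP ->] := boolP (B != set0); last exact: fourier4_set0.
pose meets u A := (A :&: covering_indices S u != set0)%:R : R.
rewrite (@eq_fourier4 _ _ _ (fun A => c + \sum_u w u * meets u A));
  last by move=> A; rewrite /sfun wsum_bigcup.
rewrite fourier4D fourier4_cst // add0r fourier4_sum /wsum -sumrN [RHS]big_mkcond.
apply: eq_bigr => u _; rewrite fourier4Z fourier4_meet // covering_indicesE.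
by case: ifP; rewrite ?mulrN1 ?oppr0 ?mulr0.
Qed.
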